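(* Let $\mathcal{A}$ be any deterministic algorithm which takes as input a function $g:\mathbb{R}^d\to\mathbb{R}$, accesses $g$ only through zeroth-, first- and second-order oracle queries (values of $g$, $\nabla g$, $\nabla^2 g$ at query points), and outputs a single point $\tilde x(g)\in\mathbb{R}^d$. Then there exists a function $\mathfrak{f}:\mathbb{R}^d\to\mathbb{R}$ that is $1$-Lipschitz, has $8$-Lipschitz gradient, satisfies $\sup_x\mathfrak{f}(x)-\inf_x\mathfrak{f}(x)\le\frac1e$, and has a global minimizer $x^\star\in B(0,10)$, such that $\mathcal{A}(\mathfrak{f})$ must make at least $2^d$ oracle calls to find an $\epsilon$-global minimizer $x^\circ$ of $\mathfrak{f}$ with $\epsilon=\frac{1}{2e}$, i.e. a point with $\mathfrak{f}(x^\circ)-\mathfrak{f}(x^\star)\le\epsilon$.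
   Context: $B(c,r)$ denotes the closed Euclidean ball of radius $r$ centered at $c$. *)

From HB Require Import structures.
From mathcomp Require Import all_boot all_order all_algebra.
From mathcomp Require Import all_classical all_reals all_analysis.
Set Implicit Arguments. Unset Strict Implicit. Unset Printing Implicit Defensive.
Import Order.TTheory GRing.Theory Num.Theory.
Import numFieldNormedType.Exports.
Local Open Scope ring_scope.

Section Defs.
Variables (R : realType) (d : nat).

Notation pt := 'rV[R]_d.

(* Euclidean norm (the library norm on matrices is the max norm). *)
Definition enorm (x : pt) : R := Num.sqrt (\sum_(i < d) (x 0 i) ^+ 2).

Definition ebasis (i : 'I_d) : pt := delta_mx 0 i.

Definition gradient (g : pt -> R) (x : pt) : pt :=
  \row_(i < d) ('D_(ebasis i) g x).
Definition hessian (g : pt -> R) (x : pt) : 'M[R]_d :=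
  \matrix_(i < d, j < d) ('D_(ebasis j) (fun y => 'D_(ebasis i) g y) x).

Definition answer := (R * pt * 'M[R]_d)%type.
Definition oracle (g : pt -> R) (x : pt) : answer :=
  (g x, gradient g x, hessian g x).

(* A deterministic algorithm: given the history of (query, answer) pairs so
   far, it either issues a new oracle query or stops and outputs a point. *)
Inductive action := Query of pt | Output of pt.
Definition algorithm := seq (pt * answer) -> action.

(* Run the algorithm on g with at most [n] steps; returns [Some x] if the
   algorithm outputs x after at most n-1 oracle queries. *)
Fixpoint run (A : algorithm) (g : pt -> R) (n : nat) (hist : seq (pt * answer))
  : option pt :=
  match n with
  | 0 => None
  | n'.+1 =>
    match A hist with
    | Output x => Some x
    | Query q => run A g n' (rcons hist (q, oracle g q))
    end
  end.

Definition lipschitz_with (L : R) (h : pt -> R) :=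
  forall x y, `|h x - h y| <= L * enorm (x - y).

Definition grad_lipschitz_with (L : R) (h : pt -> R) :=
  (forall x, differentiable h x) /\
  forall x y, enorm (gradient h x - gradient h y) <= L * enorm (x - y).

End Defs.

From HB Require Import structures.
From mathcomp Require Import all_boot all_order all_algebra.
From mathcomp Require Import all_classical all_reals all_analysis.
From mathcomp Require Import ring lra.
Import Order.TTheory GRing.Theory Num.Theory.
Import numFieldNormedType.Exports.
Set Implicit Arguments. Unset Strict Implicit. Unset Printing Implicit Defensive.
Local Open Scope classical_set_scope.
Local Open Scope ring_scope.

(* The hard instance is a narrow well [x |-> -(1/e) (1 - |x - c|^2)_+^2] of
   depth 1/e, supported on the unit ball around a hidden centre c.  Run A on the
   zero function; it visits (queries or outputs) at most 2^d points.  Among the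
   3^d points of a grid of spacing 10/sqrt d in B(0,10), a weighted count shows
   that one point is at distance at most 1 from at most (4/3)^d grid points, so
   some grid point c is at distance > 1 from every visited point.  The well
   centred at c agrees with 0 near each visited point, hence A cannot tell the
   two functions apart: it outputs the same point, where the well vanishes, at
   height 1/e above the minimum. *)

Section EuclideanNorm.
Variables (R : realType) (d : nat).
Implicit Types (u v w : 'rV[R]_d) (k : R).

Definition dot u v : R := \sum_(i < d) u 0 i * v 0 i.

Lemma dotC u v : dot u v = dot v u.
Proof. by apply: eq_bigr => i _; rewrite mulrC. Qed.

Lemma dotDl u v w : dot (u + v) w = dot u w + dot v w.
Proof. by rewrite /dot -big_split; apply: eq_bigr => i _; rewrite mxE mulrDl. Qed.

Lemma dotZl k u v : dot (k *: u) v = k * dot u v.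
Proof. by rewrite /dot mulr_sumr; apply: eq_bigr => i _; rewrite mxE mulrA. Qed.

Lemma dot_ebasis u i : dot u (ebasis R i) = u 0 i.
Proof.
rewrite /dot (bigD1 i) //= big1 => [|j /negPf ji]; rewrite /ebasis !mxE.
  by rewrite !eqxx mulr1 addr0.
by rewrite ji andbF mulr0.
Qed.

Lemma dot_self u : dot u u = \sum_(i < d) u 0 i ^+ 2.
Proof. by apply: eq_bigr => i _; rewrite expr2. Qed.

Lemma dot_self_ge0 u : 0 <= dot u u.
Proof. by rewrite dot_self sumr_ge0 // => i _; rewrite sqr_ge0. Qed.

Lemma enormE u : enorm u = Num.sqrt (dot u u).
Proof. by rewrite /enorm dot_self. Qed.

Lemma enorm_ge0 u : 0 <= enorm u.
Proof. by rewrite enormE sqrtr_ge0. Qed.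

Lemma sqr_enorm u : enorm u ^+ 2 = dot u u.
Proof. by rewrite enormE sqr_sqrtr // dot_self_ge0. Qed.

(* Lagrange's identity: the defect in Cauchy-Schwarz is a sum of squares. *)
Lemma dot_sqr_le u v : dot u v ^+ 2 <= dot u u * dot v v.
Proof.
have dot_mul (x y z t : 'rV[R]_d) :
    dot x y * dot z t = \sum_i \sum_j x 0 i * y 0 i * (z 0 j * t 0 j).
  by rewrite /dot mulr_suml; apply: eq_bigr => i _; rewrite mulr_sumr.
have lagrange : \sum_i \sum_j (u 0 i * v 0 j - u 0 j * v 0 i) ^+ 2 =
    dot u u * dot v v + dot u u * dot v v - 2 * dot u v ^+ 2.
  have swap : dot u u * dot v v = \sum_i \sum_j u 0 j * u 0 j * (v 0 i * v 0 i).
    by rewrite dot_mul exchange_big.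
  rewrite {2}swap dot_mul expr2 dot_mul -big_split mulr_sumr -sumrB.
  apply: eq_bigr => i _ /=.
  by rewrite -big_split mulr_sumr -sumrB; apply: eq_bigr => j _ /=; ring.
have : 0 <= \sum_i \sum_j (u 0 i * v 0 j - u 0 j * v 0 i) ^+ 2.
  by do 2![apply: sumr_ge0 => ? _]; rewrite sqr_ge0.
rewrite lagrange; lra.
Qed.

Lemma dot_le_enorm u v : dot u v <= enorm u * enorm v.
Proof.
have ab_ge0 : 0 <= enorm u * enorm v by rewrite mulr_ge0 ?enorm_ge0.
have [uv_le0|uv_gt0] := leP (dot u v) 0; first exact: le_trans uv_le0 ab_ge0.
by rewrite -ler_sqr ?nnegrE ?(ltW uv_gt0) // exprMn !sqr_enorm dot_sqr_le.
Qed.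

Lemma enormD u v : enorm (u + v) <= enorm u + enorm v.
Proof.
rewrite -ler_sqr ?nnegrE ?addr_ge0 ?enorm_ge0 //.
rewrite sqr_enorm dotDl !(dotC _ (u + v)) !dotDl sqrrD -!sqr_enorm (dotC v u).
by have := dot_le_enorm u v; lra.
Qed.

Lemma enormZ k u : enorm (k *: u) = `|k| * enorm u.
Proof.
by rewrite !enormE dotZl dotC dotZl mulrA -expr2 sqrtrM ?sqr_ge0 // sqrtr_sqr.
Qed.

Lemma enorm0 : enorm (0 : 'rV[R]_d) = 0.
Proof. by rewrite -(scale0r (0 : 'rV[R]_d)) enormZ normr0 mul0r. Qed.

Lemma enormBC u v : enorm (u - v) = enorm (v - u).
Proof. by rewrite -opprB -scaleN1r enormZ normrN1 mul1r. Qed.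

Lemma ler_dist_enorm u v : `|enorm u - enorm v| <= enorm (u - v).
Proof.
rewrite ler_norml; apply/andP; split.
  by have := enormD (v - u) u; rewrite subrK enormBC; lra.
by have := enormD (u - v) v; rewrite subrK; lra.
Qed.

End EuclideanNorm.

Section Profile.
Variable R : realType.
Implicit Types s t : R.

Definition hinge s : R := Num.max 0 (1 - s).
Definition profile s : R := hinge s ^+ 2.

Lemma hinge_lin s : s <= 1 -> hinge s = 1 - s.
Proof. by move=> s1; rewrite /hinge max_r // subr_ge0. Qed.

Lemma hinge_eq0 s : 1 <= s -> hinge s = 0.
Proof. by move=> s1; rewrite /hinge max_l // subr_le0. Qed.

Lemma hinge_ge0 s : 0 <= hinge s.
Proof. by rewrite /hinge le_max lexx. Qed.

Lemma hinge_le1 s : 0 <= s -> hinge s <= 1.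
Proof. by move=> s0; rewrite /hinge ge_max ler01 /=; lra. Qed.

Lemma profile_ge0 s : 0 <= profile s.
Proof. exact: sqr_ge0. Qed.

Lemma profile_le1 s : 0 <= s -> profile s <= 1.
Proof. by move=> s0; rewrite /profile expr_le1 ?hinge_ge0 ?hinge_le1. Qed.

Lemma profile0 : profile 0 = 1.
Proof. by rewrite /profile hinge_lin ?ler01 // subr0 expr1n. Qed.

Lemma profile_eq0 s : 1 <= s -> profile s = 0.
Proof. by move=> s1; rewrite /profile hinge_eq0 // expr0n. Qed.

Lemma lipschitz_from_unit (phi : R -> R) (L : R) :
    (forall t, 1 <= t -> phi t = phi 1) ->
    (forall t t', 0 <= t -> t <= t' -> t' <= 1 ->
       `|phi t - phi t'| <= L * (t' - t)) ->
  forall t t', 0 <= t -> 0 <= t' -> `|phi t - phi t'| <= L * `|t - t'|.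
Proof.
move=> phi_const phi_lip t t' t0 t'0.
wlog tt' : t t' t0 t'0 / t <= t'.
  move=> H; have [|/ltW t't] := leP t t'; first exact: H.
  by rewrite distrC [`|t - t'|]distrC; exact: H.
have L0 : 0 <= L.
  have := phi_lip 0 1 (lexx 0) ler01 (lexx 1); rewrite subr0 mulr1.
  exact/le_trans/normr_ge0.
rewrite [`|t - t'|]distrC [`|t' - t|]ger0_norm ?subr_ge0 //.
have [t'1|t'1] := leP t' 1; first exact: phi_lip.
rewrite (phi_const t' (ltW t'1)).
have [t1|t1] := leP t 1.
  apply: (le_trans (phi_lip _ _ t0 t1 (lexx 1))).
  by apply: ler_wpM2l => //; lra.
by rewrite phi_const ?(ltW t1) // subrr normr0 mulr_ge0 ?subr_ge0.
Qed.

Lemma hinge_sqr_lipschitz t t' : 0 <= t -> 0 <= t' ->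
  `|hinge (t ^+ 2) - hinge (t' ^+ 2)| <= 2 * `|t - t'|.
Proof.
apply: (lipschitz_from_unit (phi := fun t => hinge (t ^+ 2))).
  by move=> s s1; rewrite expr1n !hinge_eq0 //; nra.
move=> s s' s0 ss' s'1; rewrite !hinge_lin; [|nra|nra].
by rewrite ger0_norm; nra.
Qed.

Lemma profile_sqr_lipschitz t t' : 0 <= t -> 0 <= t' ->
  `|profile (t ^+ 2) - profile (t' ^+ 2)| <= 2 * `|t - t'|.
Proof.
apply: (lipschitz_from_unit (phi := fun t => profile (t ^+ 2))).
  by move=> s s1; rewrite expr1n !profile_eq0 //; nra.
move=> s s' s0 ss' s'1; rewrite /profile !hinge_lin; [|nra|nra].
have -> : (1 - s ^+ 2) ^+ 2 - (1 - s' ^+ 2) ^+ 2 =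
    (s' - s) * ((s + s') * (2 - s ^+ 2 - s' ^+ 2)) by ring.
(* With [r := s + s'], [s^2 + s'^2 >= r^2 / 2] and
   [r^3 - 4r + 4 = r (r - 1)^2 + 2 (r - 5/4)^2 + 7/8]. *)
have r_bound : (s + s') * (2 - s ^+ 2 - s' ^+ 2) <= 2.
  have := sqr_ge0 (s + s' - 5/4).
  have : 0 <= (s + s') * (s + s' - 1) ^+ 2 by rewrite mulr_ge0 ?sqr_ge0 //; lra.
  have : 0 <= (s + s') * (s - s') ^+ 2 by rewrite mulr_ge0 ?sqr_ge0 //; lra.
  lra.
have r_ge0 : 0 <= (s + s') * (2 - s ^+ 2 - s' ^+ 2) by rewrite mulr_ge0; nra.
rewrite normrM ger0_norm ?subr_ge0 // ger0_norm // mulrC.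
by rewrite ler_wpM2r // subr_ge0.
Qed.

Lemma is_derive_profile s : is_derive s 1 profile (-2 * hinge s).
Proof.
have [s1|s1|->] := ltgtP s 1.
- have near_s : \forall t \near s, ((cst 1 - id) ^+ 2 : R -> R) t = profile t.
    near=> t; rewrite /profile hinge_lin ?exprfctE //.
    by apply/ltW; near: t; exact: lt_nbhsl.
  apply: (near_eq_is_derive near_s); apply: is_derive_eq.
  by rewrite (hinge_lin (ltW s1)) /GRing.scale /= expr1 !fctE; ring.
- have near_s : \forall t \near s, (cst 0 : R -> R) t = profile t.
    near=> t; rewrite profile_eq0 //.
    by apply/ltW; near: t; exact: lt_nbhsr.
  by rewrite (hinge_eq0 (ltW s1)) mulr0; exact: (near_eq_is_derive near_s).
-
  have quotient : (fun h : R => h^-1 *: ((profile \o shift 1) (h *: 1) - profile 1)) =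
      (fun h => Num.min h 0).
    apply/funext => h /=; rewrite [profile 1]profile_eq0 // subr0 /GRing.scale /= mulr1.
    have [h0|h0] := leP 0 h; first by rewrite profile_eq0 ?mulr0 //; lra.
    rewrite /profile hinge_lin; last lra.
    rewrite (_ : 1 - (h + 1) = - h); last ring.
    by rewrite sqrrN expr2 mulrA mulVf ?mul1r // ltr0_neq0.
  have min_cvg : (fun h : R => Num.min h 0) @ 0^' --> (0 : R).
    have : {for 0, continuous ((id : R -> R^o) \min (cst 0 : R -> R^o))}.
      by apply: continuous_min; [exact: cvg_id | exact: cvg_cst].
    by move/continuous_withinNx; rewrite /Order.min_fun /= minxx.
  have derivable1 : derivable profile 1 1.
    by rewrite /derivable quotient; apply/cvg_ex; exists 0.
  apply: DeriveDef => //.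
  by rewrite /derive quotient (cvg_lim _ min_cvg) // hinge_eq0 // mulr0.
Unshelve. all: by end_near. Qed.

End Profile.

Section ScalarChainRule.
Variables (R : realType) (V : normedModType R) (f : V -> R) (g : R -> R).
Variables (x : V) (dg : R).
Hypotheses (df : differentiable f x) (gdg : is_derive (f x) 1 g dg).

Lemma differentiable_comp_scalar : differentiable (g \o f) x.
Proof.
apply: differentiable_comp df _.
by apply/derivable1_diffP; exact: ex_derive.
Qed.

Lemma derive_comp_scalar v : 'D_v (g \o f) x = dg * 'D_v f x.
Proof.
have dg1 : differentiable g (f x) by apply/derivable1_diffP; exact: ex_derive.
rewrite deriveE; last exact: differentiable_comp_scalar.
rewrite diff_comp //= diff1E // -deriveE //.
by rewrite derive1E derive_val /GRing.scale /= mulrC.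
Qed.

End ScalarChainRule.

Section Oracle.
Variables (R : realType) (d : nat).
Notation pt := 'rV[R]_d.

Fixpoint visited (A : algorithm R d) (g : pt -> R) (n : nat)
    (hist : seq (pt * answer R d)) : seq pt :=
  match n with
  | 0 => [::]
  | n'.+1 =>
    match A hist with
    | Query q => q :: visited A g n' (rcons hist (q, oracle g q))
    | Output x => [:: x]
    end
  end.

Lemma size_visited A g n hist : (size (visited A g n hist) <= n)%N.
Proof.
elim: n hist => [|n IH] hist //=; case: (A hist) => [q|x] //=; exact: IH.
Qed.

Lemma run_visited A g n hist x :
  run A g n hist = Some x -> x \in visited A g n hist.
Proof.
elim: n hist => [|n IH] hist //=; case: (A hist) => [q /IH xv | y [->]].
  by rewrite in_cons xv orbT.
exact: mem_head.
Qed.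

Lemma run_eq_on_visited A g g0 n hist :
    {in visited A g0 n hist, oracle g =1 oracle g0} ->
  run A g n hist = run A g0 n hist.
Proof.
elim: n hist => [//|n IH] hist /=; case: (A hist) => [q gg0|//].
rewrite gg0; last exact: mem_head.
apply: IH => p pv.
by apply: gg0; rewrite in_cons pv orbT.
Qed.

Lemma oracle_near_eq (g g0 : pt -> R) (p : pt) :
  (\forall y \near p, g y = g0 y) -> oracle g p = oracle g0 p.
Proof.
move=> gg0; have gg0_interior := nbhs_interior gg0.
have grad : gradient g p = gradient g0 p.
  by rewrite /gradient; apply: eq_mx => _ i; exact: near_eq_derive.
have hess : hessian g p = hessian g0 p.
  rewrite /hessian; apply: eq_mx => i j; apply: near_eq_derive.
  by apply: filterS gg0_interior => y; exact: near_eq_derive.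
by rewrite /oracle grad hess (nbhs_singleton gg0).
Qed.

End Oracle.

Section Well.
Variables (R : realType) (d : nat).
Notation pt := 'rV[R]_d.

Definition sqdist (c x : pt) : R := \sum_(i < d) (x 0 i - c 0 i) ^+ 2.

Lemma sqdistE c x : sqdist c x = enorm (x - c) ^+ 2.
Proof. by rewrite sqr_enorm dot_self; apply: eq_bigr => i _; rewrite !mxE. Qed.

Lemma sqdist_ge0 c x : 0 <= sqdist c x.
Proof. by rewrite sqdistE sqr_ge0. Qed.

Lemma is_derive_coord (i : 'I_d) (x v : pt) :
  is_derive x v (fun y : pt => y 0 i) (v 0 i).
Proof.
apply: DeriveDef; first exact/diff_derivable/differentiable_coord.
rewrite /derive; apply: cvg_lim => //.
have quotient : \forall h \near (0 : R)^', (cst (v 0 i) : R -> R) h =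
    h^-1 *: (((fun y : pt => y 0 i) \o shift x) (h *: v) - x 0 i).
  near=> h => /=; rewrite !mxE /GRing.scale /= addrK mulrA mulVf ?mul1r //.
  by near: h; exact: nbhs_dnbhs_neq.
by apply: cvg_trans (near_eq_cvg quotient) _; exact: cvg_cst.
Unshelve. all: by end_near. Qed.

Lemma sqdist_sum c :
  sqdist c = \sum_(i < d) (((fun y : pt => y 0 i) - cst (c 0 i)) ^+ 2).
Proof.
by apply/funext => x; rewrite fct_sumE; apply: eq_bigr => i _; rewrite exprfctE.
Qed.

Lemma is_derive_sqdist c x v : is_derive x v (sqdist c) (2 * dot (x - c) v).
Proof.
rewrite sqdist_sum; apply: is_derive_eq.
  apply: is_derive_sum => i; apply: is_deriveX; apply: is_deriveB.
  exact: is_derive_coord.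
rewrite /dot mulr_sumr; apply: eq_bigr => i _.
by rewrite /GRing.scale /= expr1 subr0 !mxE mulrA.
Qed.

Lemma differentiable_sqdist c x : differentiable (sqdist c) x.
Proof.
rewrite sqdist_sum; apply: differentiable_sum => i; apply: differentiableX.
by apply: differentiableB; [exact: differentiable_coord | exact: differentiable_cst].
Qed.

Lemma hinge_scale_lipschitz (u v : pt) :
  enorm (hinge (enorm u ^+ 2) *: u - hinge (enorm v ^+ 2) *: v) <= 3 * enorm (u - v).
Proof.
wlog v1 : u v / enorm v <= 1.
  move=> H; have [|v1] := leP (enorm v) 1; first exact: H.
  have [u1|u1] := leP (enorm u) 1.
    by rewrite (enormBC (_ *: u)) (enormBC u v); exact: H.
  have u0 := enorm_ge0 u; have v0 := enorm_ge0 v.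
  rewrite !hinge_eq0; [|nra|nra].
  by rewrite !scale0r subrr enorm0 mulr_ge0 ?enorm_ge0.
set a := hinge (enorm u ^+ 2); set b := hinge (enorm v ^+ 2).
have -> : a *: u - b *: v = a *: (u - v) + (a - b) *: v.
  by rewrite scalerBr scalerBl addrA subrK.
apply: le_trans (enormD _ _) _; rewrite !enormZ.
have a_ge0 : 0 <= a := hinge_ge0 _.
have a_le1 : a <= 1 by apply: hinge_le1; rewrite sqr_ge0.
have ab : `|a - b| <= 2 * enorm (u - v).
  apply: le_trans (hinge_sqr_lipschitz (enorm_ge0 u) (enorm_ge0 v)) _.
  by rewrite ler_wpM2l // ler_dist_enorm.
rewrite (ger0_norm a_ge0).
have := enorm_ge0 (u - v); have := normr_ge0 (a - b); have := enorm_ge0 v; nra.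
Qed.

Variables (c : pt) (h : R).

Definition well (x : pt) : R := - h * profile (sqdist c x).

Lemma is_derive_scaled_profile (s : R) :
  is_derive s 1 ( *%R (- h) \o @profile R) (2 * h * hinge s).
Proof.
apply: is_derive_eq; first exact: is_deriveZ (is_derive_profile _).
by rewrite /GRing.scale /=; ring.
Qed.

Lemma differentiable_well x : differentiable well x.
Proof.
exact: differentiable_comp_scalar (differentiable_sqdist c x)
  (is_derive_scaled_profile _).
Qed.

Lemma derive_well x v : 'D_v well x = 4 * h * hinge (sqdist c x) * dot (x - c) v.
Proof.
rewrite (derive_comp_scalar (differentiable_sqdist c x) (is_derive_scaled_profile _)).
by rewrite (derive_val (is_derive := is_derive_sqdist c x v)); ring.
Qed.

Lemma gradient_well x : gradient well x = (4 * h * hinge (sqdist c x)) *: (x - c).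
Proof. by apply/rowP => j; rewrite /gradient !mxE derive_well dot_ebasis !mxE. Qed.

Lemma well_center : well c = - h.
Proof. by rewrite /well sqdistE subrr enorm0 expr0n profile0 mulr1. Qed.

Lemma well_eq0 x : 1 <= sqdist c x -> well x = 0.
Proof. by move=> x1; rewrite /well profile_eq0 // mulr0. Qed.

Lemma oracle_well_far p : 1 < sqdist c p -> oracle well p = oracle (fun=> 0) p.
Proof.
move=> p_far.
have sqdist_cont := differentiable_continuous (differentiable_sqdist c p).
apply: oracle_near_eq; near=> y; apply/well_eq0/ltW.
by near: y; exact: sqdist_cont _ (lt_nbhsr p_far).
Unshelve. all: by end_near. Qed.

Hypotheses (h_ge0 : 0 <= h) (h_le_half : h <= 1/2).

Lemma well_range x : - h <= well x <= 0.
Proof.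
rewrite /well mulNr lerN2 oppr_le0 mulr_ge0 ?profile_ge0 // andbT.
by rewrite ler_piMr ?profile_le1 ?sqdist_ge0.
Qed.

Lemma well_lipschitz : lipschitz_with 1 well.
Proof.
move=> x y; rewrite /well !sqdistE -mulrBr normrM normrN (ger0_norm h_ge0) mul1r.
have := profile_sqr_lipschitz (enorm_ge0 (x - c)) (enorm_ge0 (y - c)).
have := ler_dist_enorm (x - c) (y - c); rewrite opprB addrA subrK.
have := normr_ge0 (enorm (x - c) - enorm (y - c)).
have := normr_ge0 (profile (enorm (x - c) ^+ 2) - profile (enorm (y - c) ^+ 2)).
move=> P_ge0 Q_ge0 Q_le P_le; have := ler_wpM2r P_ge0 h_le_half; lra.
Qed.

Lemma well_grad_lipschitz : grad_lipschitz_with 8 well.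
Proof.
split=> [x|x y]; first exact: differentiable_well.
rewrite !gradient_well !sqdistE -!(scalerA (4 * h)) -scalerBr enormZ.
have -> : x - y = (x - c) - (y - c) by rewrite opprB addrA subrK.
have := hinge_scale_lipschitz (x - c) (y - c).
set E := enorm (_ - _); set D := enorm (_ - _) => E_le.
have E_ge0 : 0 <= E := enorm_ge0 _.
have D_ge0 : 0 <= D := enorm_ge0 _.
rewrite ger0_norm ?mulr_ge0 //; have := ler_wpM2r E_ge0 h_le_half; lra.
Qed.

End Well.

Section Packing.
Variables (R : realType) (d : nat).
Hypothesis d_gt0 : (0 < d)%N.
Notation pt := 'rV[R]_d.
Notation code := {ffun 'I_d -> 'I_3}.

Definition spacing : R := 10 / Num.sqrt d%:R.

Lemma spacing_gt0 : 0 < spacing.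
Proof. by rewrite divr_gt0 // sqrtr_gt0 ltr0n. Qed.

Lemma sqr_spacing : spacing ^+ 2 * d%:R = 100.
Proof.
have d_pos : (0 : R) < d%:R by rewrite ltr0n.
by rewrite /spacing expr_div_n sqr_sqrtr ?ler0n //; field; lra.
Qed.

Definition grid_point (s : code) : pt := \row_i (spacing * ((s i)%:R - 1)).

Lemma enorm_grid_point s : enorm (grid_point s) <= 10.
Proof.
have -> : (10 : R) = Num.sqrt (spacing ^+ 2 * d%:R).
  have ten : (10 : R) ^+ 2 = 100 by rewrite expr2 -natrM.
  by rewrite sqr_spacing -ten sqrtr_sqr ger0_norm.
rewrite ler_sqrt ?mulr_ge0 ?sqr_ge0 // -[X in _ * X%:R]card_ord mulr_natr -sumr_const.
apply: ler_sum => i _; rewrite mxE exprMn -[leRHS]mulr1 ler_wpM2l ?sqr_ge0 //.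
by case: (s i) => [[|[|[|]]]] //= _; rewrite ?subrr ?expr0n //=; lra.
Qed.

Definition decay : R := 9 / 10.
Definition penalty : R := decay ^+ 25.

Definition near_level (p : pt) (i : 'I_d) (j : 'I_3) : bool :=
  `|spacing * (j%:R - 1) - p 0 i| < spacing / 2.

Definition weight (p : pt) (i : 'I_d) (j : 'I_3) : R :=
  if near_level p i j then 1 else penalty.

Lemma penalty_ge0 : 0 <= penalty.
Proof. by rewrite exprn_ge0 // /decay; lra. Qed.

Lemma penalty_le : penalty <= 1 / 10.
Proof. by rewrite /penalty /decay !exprS expr0; lra. Qed.

Lemma weight_ge0 p i j : 0 <= weight p i j.
Proof. by rewrite /weight; case: ifP => _ //; exact: penalty_ge0. Qed.

Lemma sum_weight p i : \sum_(j < 3) weight p i j <= 1 + 2 * penalty.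
Proof.
(* the three windows are disjoint, so at most one weight is [1] *)
rewrite !big_ord_recl big_ord0 /= /weight /near_level /=.
have := spacing_gt0; have := penalty_ge0; have := penalty_le.
set x := p 0 i; rewrite !ltr_norml => ? ? ?.
case: (boolP (_ < _ < _)) => /andP level0 /=;
case: (boolP (_ < _ < _)) => /andP level1 /=;
case: (boolP (_ < _ < _)) => /andP level2 /=;
move: level0 level1 level2; rewrite /bump /= ?add1n ?addn0 => *; nra.
Qed.

Lemma prod_weight_ge p s :
  sqdist (grid_point s) p <= 1 -> decay ^+ d <= \prod_(i < d) weight p i (s i).
Proof.
move=> p_near; pose B := [set i | ~~ near_level p i (s i)]%SET.
have -> : \prod_(i < d) weight p i (s i) = penalty ^+ #|B|.
  rewrite -prodr_const (bigID (fun i => i \in B)) /= [X in _ * X]big1 ?mulr1.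
    by apply: eq_bigr => i; rewrite inE /weight => /negPf ->.
  by move=> i; rewrite inE negbK /weight => ->.
(* each coordinate off its level contributes at least [(spacing / 2)^2 = 25 / d] *)
have far_coords : (#|B| * 25 <= d)%N.
  have : #|B|%:R * (spacing ^+ 2 / 4) <= 1.
    apply: le_trans p_near; rewrite mulr_natl -sumr_const /sqdist.
    rewrite [leRHS](bigID (fun i => i \in B)) /= -[leLHS]addr0.
    rewrite lerD ?sumr_ge0 // => [|i _].
      apply: ler_sum => i; rewrite inE /near_level -leNgt mxE distrC => off.
      by have := spacing_gt0; rewrite -[leRHS]real_normK ?num_real //; nra.
    exact: sqr_ge0.
  have quarter : spacing ^+ 2 / 4 * d%:R = 25 by rewrite mulrAC sqr_spacing; lra.
  rewrite -(ler_nat R) natrM => B_le.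
  by have := ler_wpM2r (ler0n R d) B_le; rewrite mul1r -mulrA quarter.
rewrite /penalty -exprM mulnC; apply: ler_wiXn2l => //; rewrite /decay; lra.
Qed.

Lemma sum_prod_weight p :
  \sum_(s : code) \prod_(i < d) weight p i (s i) <= (1 + 2 * penalty) ^+ d.
Proof.
rewrite -bigA_distr_bigA /= -[in leRHS](card_ord d) -prodr_const.
apply: ler_prod => i _; rewrite sum_weight andbT.
by apply: sumr_ge0 => j _; exact: weight_ge0.
Qed.

Lemma exists_grid_point_far (P : seq pt) : (size P <= 2 ^ d)%N ->
  exists s, forall p, p \in P -> 1 < sqdist (grid_point s) p.
Proof.
move=> sizeP; apply: contrapT => no_far.
have blocked s : exists2 p, p \in P & sqdist (grid_point s) p <= 1.
  apply: contrapT => s_far; apply: no_far; exists s => p pP.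
  by rewrite ltNge; apply/negP => p_near; apply: s_far; exists p.
have card_code : #|{: code}| = (3 ^ d)%N by rewrite card_ffun !card_ord.
have lower : (3 * decay) ^+ d <= \sum_(s : code) \sum_(p <- P) \prod_i weight p i (s i).
  rewrite exprMn -natrX -card_code mulr_natl -sumr_const; apply: ler_sum => s _.
  have [p pP p_near] := blocked s; rewrite (big_rem p pP) /=.
  rewrite -[leLHS]addr0 lerD ?prod_weight_ge //.
  by apply: sumr_ge0 => q _; apply: prodr_ge0 => i _; exact: weight_ge0.
have upper : \sum_(s : code) \sum_(p <- P) \prod_i weight p i (s i)
    <= (2 * (1 + 2 * penalty)) ^+ d.
  rewrite exchange_big /=; apply: (le_trans (ler_sum _ (fun p _ => sum_prod_weight p))).
  rewrite big_const_seq count_predT iter_addr_0 exprMn -natrX (mulr_natl _ (2 ^ d)).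
  by apply: ler_wpMn2l; rewrite ?exprn_ge0 // addr_ge0 ?mulr_ge0 ?penalty_ge0.
have := le_trans lower upper; apply/negP; rewrite -ltNge ltrXn2r ?gtn_eqF //.
all: by have := penalty_ge0; have := penalty_le; rewrite /decay; lra.
Qed.

End Packing.

Theorem theoremB1 (R : realType) (d : nat) (hd : (0 < d)%N)
    (A : algorithm R d) :
  exists (f : 'rV[R]_d -> R) (xstar : 'rV[R]_d),
    lipschitz_with 1 f /\
    grad_lipschitz_with 8 f /\
    (forall x y, f x - f y <= (expR 1)^-1) /\
    enorm xstar <= 10 /\
    (forall x, f xstar <= f x) /\
    (forall xo, run A f (2 ^ d) [::] = Some xo ->
       f xo - f xstar > (2 * expR 1)^-1).
Proof.
set h : R := (expR 1)^-1.
have e_ge2 : 2 <= expR (1 : R) by have := expR_ge1Dx (1 : R); lra.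
have h_gt0 : 0 < h by rewrite invr_gt0; lra.
have h_le_half : h <= 1 / 2 by rewrite /h -invf_div divr1 lef_pV2 ?posrE //; lra.
have [s far] := exists_grid_point_far hd (size_visited A (fun=> 0) (2 ^ d) [::]).
pose c := grid_point R s.
have range := well_range c (ltW h_gt0).
exists (well c h), c; split; first exact: well_lipschitz (ltW h_gt0) h_le_half.
split; first exact: well_grad_lipschitz (ltW h_gt0) h_le_half.
split; first by move=> x y; have /andP[? ?] := range x; have /andP[? ?] := range y; lra.
split; first exact: enorm_grid_point.
split; first by move=> x; rewrite well_center; have /andP[] := range x.
move=> xo run_f.
have run_0 : run A (fun=> 0) (2 ^ d) [::] = Some xo.
  by rewrite -run_f; apply/esym/run_eq_on_visited => p /far /oracle_well_far.
rewrite well_center well_eq0; last exact: ltW (far _ (run_visited run_0)).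
by rewrite invfM -/h; lra.
Qed.
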